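(* Let Knapsack be the parameterised query whose inputs are $n$ items with profits $p_1,\dots,p_n$ and weights $w_1,\dots,w_n$, a capacity bound $B$ and a profit threshold $T$ (all natural numbers given as $n$-bit numbers), with parameter $B$, asking whether there is $S\subseteq[n]$ with $\sum_{i\in S}p_i\ge T$ and $\sum_{i\in S}w_i\le B$. Let $\Delta_{\mathrm{KS}}$ be the set of change operations that arbitrarily replace the profit and the weight of one item, and that set $B$ or $T$ to any value. Then $(\mathrm{Knapsack},\Delta_{\mathrm{KS}})\in\mathrm{ParaSD}$.
   Context: Encoding: the domain is $[n]$; a binary relation $P$ with $(i,j)\in P$ iff the $j$-th bit of $p_i$ is $1$, analogously a binary relation $W$ for the weights, and unary relations $B$, $T$ for the bits of $B$ and $T$. The parameter $B$ may be any value up to $2^n-1$. $\mathrm{FO}{+}\mathrm{ar}$: order-invariant first-order logic with access to a linear order and compatible addition and multiplication. An advice is a computable map $\pi$ from $\mathbb{N}$ to structures over a fixed schema. A dynamic program with advice $(P,\pi)$ has auxiliary relations including a query relation and, for every change operation and auxiliary relation, an update $\mathrm{FO}{+}\mathrm{ar}$ formula over input, auxiliary and advice schema (with change parameters as free variables); states are $(D\uplus D_{\mathrm{adv}},\mathcal{I},\mathcal{A},\pi(k_{\max}))$ with arithmetic on $D\uplus D_{\mathrm{adv}}$ and auxiliary relations over $D\uplus D_{\mathrm{adv}}$; after a change each auxiliary relation is replaced by the result of its update formula on the old state. $(Q,\kappa,\Delta)\in\mathrm{ParaSD}$ if for some computable $f$ there is such a program with $|\pi(k)|\le f(k)$ for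 all $k$ such that, for every empty initial input, every $k_{\max}$ and every change sequence over $\Delta$ keeping the parameter at most $k_{\max}$ after every prefix, the query relation (starting from empty auxiliary relations and advice $\pi(k_{\max})$) equals the query answer on the current input. *)

From mathcomp Require Import all_boot.

Set Implicit Arguments.
Unset Strict Implicit.
Unset Printing Implicit Defensive.

Inductive recf : Type :=
| RZero
| RSucc
| RProj (i : nat)
| RComp (f : recf) (gs : seq recf)
| RPrec (f g : recf)
| RMu (f : recf).

Inductive reval : recf -> seq nat -> nat -> Prop :=
| ev_zero xs : reval RZero xs 0
| ev_succ x xs : reval RSucc (x :: xs) x.+1
| ev_proj i xs : i < size xs -> reval (RProj i) xs (nth 0 xs i)
| ev_comp f gs xs ys y :
    revals gs xs ys -> reval f ys y -> reval (RComp f gs) xs y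
| ev_prec0 f g xs y : reval f xs y -> reval (RPrec f g) (0 :: xs) y
| ev_precS f g m xs r y :
    reval (RPrec f g) (m :: xs) r -> reval g (m :: r :: xs) y ->
    reval (RPrec f g) (m.+1 :: xs) y
| ev_mu f xs y :
    reval f (y :: xs) 0 ->
    (forall z, z < y -> exists v, 0 < v /\ reval f (z :: xs) v) ->
    reval (RMu f) xs y
with revals : seq recf -> seq nat -> seq nat -> Prop :=
| evs_nil xs : revals [::] xs [::]
| evs_cons g gs xs y ys :
    reval g xs y -> revals gs xs ys -> revals (g :: gs) xs (y :: ys).

Definition computable1 (F : nat -> nat) : Prop :=
  exists c : recf, forall x, reval c [:: x] (F x).

Definition computable_rel (a : nat) (F : nat -> seq nat -> bool) : Prop :=
  exists c : recf, forall k t, size t = a -> reval c (k :: t) (nat_of_bool (F k t)).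

Definition bitn (m j : nat) : bool := odd (m %/ 2 ^ j).

(* profits p, weights w (of the items 0..n-1), capacity B, threshold T *)
Record ksinst := KSInst {
  ks_p : nat -> nat;
  ks_w : nat -> nat;
  ks_B : nat;
  ks_T : nat }.

(* the empty input: all relations P, W, B, T empty, i.e. all numbers 0 *)
Definition ks_empty : ksinst := KSInst (fun _ => 0) (fun _ => 0) 0 0.

Definition knapsack (n : nat) (I : ksinst) : bool :=
  [exists S : {set 'I_n},
     (ks_T I <= \sum_(i in S) ks_p I i) && (\sum_(i in S) ks_w I i <= ks_B I)].

Definition ks_param (I : ksinst) : nat := ks_B I.

(* input schema: binary P, W and unary B, T *)
Inductive isym := SP | SW | SB | ST.

Definition inp_rel (n : nat) (I : ksinst) (s : isym) (vs : seq nat) : bool :=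
  match s, vs with
  | SP, [:: i; j] => [&& i < n, j < n & bitn (ks_p I i) j]
  | SW, [:: i; j] => [&& i < n, j < n & bitn (ks_w I i) j]
  | SB, [:: j] => (j < n) && bitn (ks_B I) j
  | ST, [:: j] => (j < n) && bitn (ks_T I) j
  | _, _ => false
  end.

Inductive change (n : nat) : Type :=
| CItem (i : 'I_n) (p w : nat)
| CB (b : nat)
| CT (t : nat).

Definition valid_change (n : nat) (c : change n) : bool :=
  match c with
  | CItem _ p w => (p < 2 ^ n) && (w < 2 ^ n)
  | CB b => b < 2 ^ n
  | CT t => t < 2 ^ n
  end.

Definition apply_change (n : nat) (c : change n) (I : ksinst) : ksinst :=
  match c with
  | CItem i p w =>
      KSInst (fun j => if j == val i then p else ks_p I j)
             (fun j => if j == val i then w else ks_w I j) (ks_B I) (ks_T I)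
  | CB b => KSInst (ks_p I) (ks_w I) b (ks_T I)
  | CT t => KSInst (ks_p I) (ks_w I) (ks_B I) t
  end.

Definition run_input (n : nat) (cs : seq (change n)) : ksinst :=
  foldl (fun I c => apply_change c I) ks_empty cs.

(* kinds of change operations (one update formula per kind and aux relation) *)
Inductive ckind := KItem | KB | KT.

Definition change_kind (n : nat) (c : change n) : ckind :=
  match c with CItem _ _ _ => KItem | CB _ => KB | CT _ => KT end.

(* element parameters (become free variables 0, 1, ...) *)
Definition change_elems (n : nat) (c : change n) : seq nat :=
  match c with CItem i _ _ => [:: val i] | _ => [::] end.

(* number-valued parameters (n-bit numbers, accessed bitwise) *)
Definition change_nums (n : nat) (c : change n) : seq nat :=
  match c with CItem _ p w => [:: p; w] | CB b => [:: b] | CT t => [:: t] end.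

Inductive form : Type :=
| FTrue
| FEq (x y : nat)
| FLt (x y : nat)
| FAdd (x y z : nat)
| FMul (x y z : nat)
| FInp (s : isym) (xs : seq nat)
| FAux (r : nat) (xs : seq nat)
| FAdv (r : nat) (xs : seq nat)
| FPar (k : nat) (x : nat)        (* bit x of the k-th numeric change parameter *)
| FNot (f : form)
| FAnd (f g : form)
| FOr (f g : form)
| FEx (x : nat) (f : form)
| FAll (x : nat) (f : form).

Record advice := Advice {
  adv_size : nat;
  adv_rel : nat -> seq nat -> bool }.

Record dynprog := DynProg {
  aux_ar : seq nat;                  (* arities of the auxiliary relations;
                                        relation 0 is the query relation *)
  adv_ar : seq nat;
  upd : ckind -> nat -> form }.

Definition wf_prog (P : dynprog) : bool :=
  (0 < size (aux_ar P)) && (nth 0 (aux_ar P) 0 == 0).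

Definition upd_env (env : nat -> nat) (x v : nat) : nat -> nat :=
  fun y => if y == x then v else env y.

(* Universe D (+) D_adv = {0,..,n + adv_size - 1}: input elements first
   (element j of [n] is the number j), advice element a is the number n + a. *)
Fixpoint holds (P : dynprog) (n : nat) (adv : advice) (I : ksinst)
    (A : nat -> seq nat -> bool) (par : seq nat) (env : nat -> nat)
    (f : form) : bool :=
  let N := n + adv_size adv in
  match f with
  | FTrue => true
  | FEq x y => env x == env y
  | FLt x y => env x < env y
  | FAdd x y z => env x + env y == env z
  | FMul x y z => env x * env y == env z
  | FInp s xs => inp_rel n I s (map env xs)
  | FAux r xs =>
      let vs := map env xs in
      [&& r < size (aux_ar P), size vs == nth 0 (aux_ar P) r,
          all (fun v => v < N) vs & A r vs]
  | FAdv r xs =>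
      let vs := map env xs in
      [&& r < size (adv_ar P), size vs == nth 0 (adv_ar P) r,
          all (fun v => (n <= v) && (v < N)) vs &
          adv_rel adv r (map (fun v => v - n) vs)]
  | FPar k x => bitn (nth 0 par k) (env x)
  | FNot g => ~~ holds P n adv I A par env g
  | FAnd g h => holds P n adv I A par env g && holds P n adv I A par env h
  | FOr g h => holds P n adv I A par env g || holds P n adv I A par env h
  | FEx x g => has (fun v => holds P n adv I A par (upd_env env x v) g) (iota 0 N)
  | FAll x g => all (fun v => holds P n adv I A par (upd_env env x v) g) (iota 0 N)
  end.

Definition pstate := (ksinst * (nat -> seq nat -> bool))%type.

Definition empty_aux : nat -> seq nat -> bool := fun _ _ => false.

(* one change: every auxiliary relation r of arity a becomes
   { v in U^a | upd (kind c) r holds on the OLD state, with the element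
     change parameters as variables 0..l-1 and v as variables l..l+a-1 } *)
Definition step (P : dynprog) (n : nat) (adv : advice) (st : pstate)
    (c : change n) : pstate :=
  let I := st.1 in
  let A := st.2 in
  let N := n + adv_size adv in
  (apply_change c I,
   fun r vs =>
     [&& r < size (aux_ar P), size vs == nth 0 (aux_ar P) r,
         all (fun v => v < N) vs &
         holds P n adv I A (change_nums c)
               (fun x => nth 0 (change_elems c ++ vs) x) (upd P (change_kind c) r)]).

Definition run (P : dynprog) (n : nat) (adv : advice) (cs : seq (change n)) : pstate :=
  foldl (@step P n adv) (ks_empty, empty_aux) cs.

Definition query_rel (st : pstate) : bool := st.2 0 [::].

Definition advice_computable (P : dynprog) (pi : nat -> advice) : Prop :=
  computable1 (fun k => adv_size (pi k)) /\
  forall r, r < size (adv_ar P) ->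
    computable_rel (nth 0 (adv_ar P) r)
      (fun k t => all (fun v => v < adv_size (pi k)) t && adv_rel (pi k) r t).

Definition ks_correct (P : dynprog) (pi : nat -> advice) : Prop :=
  forall (n kmax : nat) (cs : seq (change n)),
    cs <> [::] ->
    all (@valid_change n) cs ->
    (forall m, m <= size cs -> ks_param (run_input (take m cs)) <= kmax) ->
    query_rel (@run P n (pi kmax) cs) = knapsack n (run_input cs).

Definition knapsack_in_ParaSD : Prop :=
  exists f : nat -> nat, computable1 f /\
  exists (P : dynprog) (pi : nat -> advice),
    [/\ wf_prog P, advice_computable P pi,
        (forall k, adv_size (pi k) <= f k) & ks_correct P pi].

(* Numbers up to the parameter bound [k] are the [k + 1] advice elements, whose
   binary expansions the advice provides; so every capacity [b <= B <= k] is a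
   single element. The program maintains the relation [C(i, j, y, q)]: bit [q] of
   the optimal profit of the items in [[i, j)] under capacity [y], saturated to
   the [N] bits indexable in the universe of size [N = n + k + 1]. When item [x]
   changes, the cells with [i <= x < j] obey
     opt'(i, j, b) = max_{b1 + b2 + b3 = b} opt(i, x, b1) + item'(b2) + opt(x + 1, j, b3),
   whose right-hand side reads only old cells, and the other cells are unchanged.
   Sums and comparisons of [N]-bit numbers are first-order definable through
   their generate/propagate (carry lookahead) form, and the maximum is "a split
   whose value dominates that of every split". The query is [T <= C(0, n + k, B)]. *)

From mathcomp Require Import all_boot zify.

Set Implicit Arguments.
Unset Strict Implicit.
Unset Printing Implicit Defensive.

(** * Primitive recursive programs *)

Lemma reval_proj0 x xs : reval (RProj 0) (x :: xs) x.
Proof. exact: (@ev_proj 0 (x :: xs)). Qed.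

Lemma reval_proj1 x y xs : reval (RProj 1) (x :: y :: xs) y.
Proof. exact: (@ev_proj 1 (x :: y :: xs)). Qed.

Lemma reval_proj2 x y z xs : reval (RProj 2) (x :: y :: z :: xs) z.
Proof. exact: (@ev_proj 2 (x :: y :: z :: xs)). Qed.

Lemma reval_comp1 f g xs y z :
  reval g xs y -> reval f [:: y] z -> reval (RComp f [:: g]) xs z.
Proof. by move=> Hg Hf; apply: (ev_comp (ys := [:: y])) => //; do !constructor. Qed.

Lemma reval_comp2 f g1 g2 xs y1 y2 z :
  reval g1 xs y1 -> reval g2 xs y2 -> reval f [:: y1; y2] z ->
  reval (RComp f [:: g1; g2]) xs z.
Proof. by move=> Hg1 Hg2 Hf; apply: (ev_comp (ys := [:: y1; y2])) => //; do !constructor. Qed.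

Lemma reval_prec f g xs (F : nat -> nat) :
  reval f xs (F 0) -> (forall m, reval g (m :: F m :: xs) (F m.+1)) ->
  forall m, reval (RPrec f g) (m :: xs) (F m).
Proof. by move=> H0 HS; elim=> [|m IH]; [exact: ev_prec0 | exact: ev_precS IH (HS m)]. Qed.

Definition rone : recf := RComp RSucc [:: RZero].

Lemma reval_one xs : reval rone xs 1.
Proof. by apply: (ev_comp (ys := [:: 0])); do !constructor. Qed.

Definition radd : recf := RPrec (RProj 0) (RComp RSucc [:: RProj 1]).

Lemma reval_add x y : reval radd [:: x; y] (x + y).
Proof.
apply: (reval_prec (F := addn^~ y)) => [|m]; first exact: reval_proj0.
by apply: reval_comp1; [exact: reval_proj1 | exact: ev_succ].
Qed.

Definition rpred : recf := RPrec RZero (RProj 0).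

Lemma reval_pred x : reval rpred [:: x] x.-1.
Proof. by apply: (reval_prec (F := predn)) => [|m]; [exact: ev_zero | exact: reval_proj0]. Qed.

Definition rsub : recf := RPrec (RProj 0) (RComp rpred [:: RProj 1]).

Lemma reval_sub y x : reval rsub [:: y; x] (x - y).
Proof.
apply: (reval_prec (F := subn x)) => [|m]; first by rewrite subn0; exact: reval_proj0.
by apply: reval_comp1; [exact: reval_proj1 | rewrite subnS; exact: reval_pred].
Qed.

Definition riszero : recf := RPrec rone RZero.

Lemma reval_iszero x : reval riszero [:: x] (x == 0).
Proof.
by apply: (reval_prec (F := fun m => nat_of_bool (m == 0))) => [|m];
  [exact: reval_one | exact: ev_zero].
Qed.

Definition rleq : recf := RComp riszero [:: RComp rsub [:: RProj 1; RProj 0]].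

Lemma reval_leq x y : reval rleq [:: x; y] (x <= y).
Proof.
apply: reval_comp1; last by rewrite -subn_eq0; exact: reval_iszero.
by apply: reval_comp2; [exact: reval_proj1 | exact: reval_proj0 | exact: reval_sub].
Qed.

Definition rand : recf := RPrec RZero (RProj 2).

Lemma reval_and (a b : bool) : reval rand [:: nat_of_bool a; nat_of_bool b] (a && b).
Proof.
have E m : reval rand [:: m; nat_of_bool b] (if m is 0 then 0 else nat_of_bool b).
  by apply: (reval_prec (F := fun m => if m is 0 then 0 else nat_of_bool b)) => [|m'];
    [exact: ev_zero | exact: reval_proj2].
by case: a (E a) => H; exact: H.
Qed.

Definition rodd : recf := RPrec RZero (RComp riszero [:: RProj 1]).

Lemma reval_odd x : reval rodd [:: x] (odd x).
Proof.
apply: (reval_prec (F := fun m => nat_of_bool (odd m))) => [|m]; first exact: ev_zero.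
apply: reval_comp1; first exact: reval_proj1.
by rewrite /=; case: (odd m) (reval_iszero (odd m)) => H; exact: H.
Qed.

Definition rhalf : recf := RPrec RZero (RComp radd [:: RProj 1; RComp rodd [:: RProj 0]]).

Lemma reval_half x : reval rhalf [:: x] x./2.
Proof.
apply: (reval_prec (F := half)) => [|m]; first exact: ev_zero.
apply: reval_comp2; first exact: reval_proj1.
  by apply: reval_comp1; [exact: reval_proj0 | exact: reval_odd].
by rewrite /= uphalf_half addnC; exact: reval_add.
Qed.

Definition rshiftr : recf := RPrec (RProj 0) (RComp rhalf [:: RProj 1]).

Lemma reval_shiftr j a : reval rshiftr [:: j; a] (a %/ 2 ^ j).
Proof.
apply: (reval_prec (F := fun m => a %/ 2 ^ m)) => [|m].
  by rewrite expn0 divn1; exact: reval_proj0.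
apply: reval_comp1; first exact: reval_proj1.
by rewrite expnS mulnC divnMA divn2; exact: reval_half.
Qed.

Definition rbit : recf := RComp rodd [:: RComp rshiftr [:: RProj 1; RProj 0]].

Lemma reval_bit a j : reval rbit [:: a; j] (bitn a j).
Proof.
apply: reval_comp1; last exact: reval_odd.
by apply: reval_comp2; [exact: reval_proj1 | exact: reval_proj0 | exact: reval_shiftr].
Qed.

(** * Binary arithmetic *)

Section Bits.

Lemma bit0n q : bitn 0 q = false.
Proof. by rewrite /bitn div0n. Qed.

Lemma bitn_small a q : a < 2 ^ q -> bitn a q = false.
Proof. by move=> Ha; rewrite /bitn divn_small. Qed.

Lemma bitn_ge a q r : a < 2 ^ q -> q <= r -> bitn a r = false.
Proof. by move=> Ha qr; apply: bitn_small; apply: leq_trans Ha _; exact: leq_pexp2l. Qed.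

Lemma modn_expS a q : a %% 2 ^ q.+1 = a %% 2 ^ q + bitn a q * 2 ^ q.
Proof.
set d := a %/ 2 ^ q.
have Ha : a = d %/ 2 * 2 ^ q.+1 + (odd d * 2 ^ q + a %% 2 ^ q).
  have e1 := divn_eq a (2 ^ q); have e2 := divn_eq d 2; rewrite modn2 in e2.
  rewrite -/d in e1; rewrite expnS; move: e1 e2; set X := 2 ^ q; set h := d %/ 2.
  set o := nat_of_bool (odd d); set r := a %% X; nia.
rewrite {1}Ha modnMDl modn_small; first by rewrite addnC.
have := ltn_pmod a (expn_gt0 2 q); rewrite expnS; case: (odd d) => /=; lia.
Qed.

(* The carry into position [q] of a sum and the comparison of two numbers below
   [2 ^ q] both have this generate/propagate form, which is first-order. *)
Fixpoint gen_prop (G Pr : nat -> bool) (q : nat) : bool :=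
  if q is q'.+1 then G q' || (Pr q' && gen_prop G Pr q') else false.

Lemma gen_propP (G Pr : nat -> bool) q :
  reflect (exists r, [/\ r < q, G r & forall t, r < t -> t < q -> Pr t]) (gen_prop G Pr q).
Proof.
elim: q => [|q IH] /=; first by apply: ReflectF => -[r []].
apply: (iffP idP) => [/orP[Gq|/andP[Pq /IH[r [rq Gr Hr]]]]|[r [rq Gr Hr]]].
- by exists q; split => // t qt tq; lia.
- exists r; split => [|//|t rt]; first lia.
  rewrite ltnS leq_eqVlt => /orP[/eqP->//|]; exact: Hr.
- move: rq; rewrite ltnS leq_eqVlt => /orP[/eqP<-|rq]; first by rewrite Gr.
  apply/orP; right; rewrite Hr //; apply/IH; exists r; split => // t rt tq.
  by apply: Hr; lia.
Qed.

Lemma carry_gen_prop a c q :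
  (2 ^ q <= a %% 2 ^ q + c %% 2 ^ q) =
  gen_prop (fun r => bitn a r && bitn c r) (fun r => bitn a r || bitn c r) q.
Proof.
elim: q => [|q IH] /=; first by rewrite expn0 !modn1.
rewrite !modn_expS -IH expnS.
have := ltn_pmod a (expn_gt0 2 q); have := ltn_pmod c (expn_gt0 2 q).
have := expn_gt0 2 q; case: (bitn a q); case: (bitn c q) => /=; lia.
Qed.

Lemma ltn_mod_gen_prop a c q :
  (c %% 2 ^ q < a %% 2 ^ q) =
  gen_prop (fun r => bitn a r && ~~ bitn c r) (fun r => bitn a r == bitn c r) q.
Proof.
elim: q => [|q IH] /=; first by rewrite expn0 !modn1.
rewrite !modn_expS -IH.
have := ltn_pmod a (expn_gt0 2 q); have := ltn_pmod c (expn_gt0 2 q).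
have := expn_gt0 2 q; move: (c %% 2 ^ q) (a %% 2 ^ q) (2 ^ q) => x y z.
case: (bitn a q); case: (bitn c q) => /=; lia.
Qed.

Lemma bitnD a c q :
  bitn (a + c) q = bitn a q (+) bitn c q (+) (2 ^ q <= a %% 2 ^ q + c %% 2 ^ q).
Proof.
rewrite /bitn.
have ea := divn_eq a (2 ^ q); have ec := divn_eq c (2 ^ q).
have la := ltn_pmod a (expn_gt0 2 q); have lc := ltn_pmod c (expn_gt0 2 q).
move: ea ec la lc; set X := 2 ^ q; set ra := a %% X; set rc := c %% X.
set da := a %/ X; set dc := c %/ X => ea ec la lc.
have -> : a + c = (da + dc + (X <= ra + rc)) * X + (ra + rc - (X <= ra + rc) * X).
  by case E: (X <= ra + rc) => /=; nia.
rewrite divnMDl ?expn_gt0 // divn_small; last by case E: (X <= ra + rc) => /=; lia.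
by rewrite addn0 !oddD; case: (X <= _).
Qed.

Lemma exp_lt_addS n k : 2 ^ n < 2 ^ (n + k.+1).
Proof. by rewrite ltn_exp2l // -addSnnS leq_addr. Qed.

Variable N : nat.

Lemma ltn_gen_prop a c : a < 2 ^ N -> c < 2 ^ N ->
  (c < a) = gen_prop (fun r => bitn a r && ~~ bitn c r) (fun r => bitn a r == bitn c r) N.
Proof. by move=> Ha Hc; rewrite -ltn_mod_gen_prop !modn_small. Qed.

Lemma overflow_gen_prop a c : a < 2 ^ N -> c < 2 ^ N ->
  (2 ^ N <= a + c) = gen_prop (fun r => bitn a r && bitn c r) (fun r => bitn a r || bitn c r) N.
Proof. by move=> Ha Hc; rewrite -carry_gen_prop !modn_small. Qed.

Lemma bitn_inj a c : a < 2 ^ N -> c < 2 ^ N ->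
  (forall q, q < N -> bitn a q = bitn c q) -> a = c.
Proof.
have notlt x y : x < 2 ^ N -> y < 2 ^ N -> (forall q, q < N -> bitn x q = bitn y q) -> ~~ (y < x).
  move=> Hx Hy Hxy; rewrite (ltn_gen_prop Hx Hy); apply/negP.
  by case/gen_propP => r [rN /andP[bx] + _]; rewrite -(Hxy r rN) bx.
move=> Ha Hc Hac; apply/eqP; rewrite eqn_leq.
by apply/andP; split; rewrite leqNgt; apply: notlt => // q qN; rewrite Hac.
Qed.

Lemma bitn_predn_exp q : q < N -> bitn (2 ^ N).-1 q.
Proof.
move=> qN; rewrite /bitn.
have -> : (2 ^ N).-1 = (2 ^ (N - q)).-1 * 2 ^ q + (2 ^ q).-1.
  have -> : 2 ^ N = 2 ^ (N - q) * 2 ^ q by rewrite -expnD subnK // ltnW.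
  have := expn_gt0 2 q; have := expn_gt0 2 (N - q); nia.
rewrite divnMDl ?expn_gt0 // divn_small ?addn0; last by rewrite prednK ?expn_gt0.
have : 0 < N - q by rewrite subn_gt0.
case: (N - q) => // e _; rewrite expnS.
by have := expn_gt0 2 e; case: (2 ^ e) => // j _; rewrite mulnS /= oddM.
Qed.

Definition sat x := minn x (2 ^ N).-1.

Lemma sat_lt x : sat x < 2 ^ N.
Proof. by rewrite /sat; have := expn_gt0 2 N; lia. Qed.

Lemma sat_id x : x < 2 ^ N -> sat x = x.
Proof. by rewrite /sat; lia. Qed.

Lemma sat_addl a c : sat (sat a + c) = sat (a + c).
Proof. by rewrite /sat; lia. Qed.

Lemma sat_sat3 a b c : sat (sat a + b + sat c) = sat (a + b + c).
Proof. by rewrite /sat; lia. Qed.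

Lemma leq_sat_small a x : a < 2 ^ N -> (a <= sat x) = (a <= x).
Proof. by rewrite /sat; lia. Qed.

Lemma leq_sat a c : a <= c -> sat a <= sat c.
Proof. by rewrite /sat; lia. Qed.

Lemma bitn_sat_add a c q : a < 2 ^ N -> c < 2 ^ N -> q < N ->
  bitn (sat (a + c)) q =
  (2 ^ N <= a + c) || (bitn a q (+) bitn c q (+) (2 ^ q <= a %% 2 ^ q + c %% 2 ^ q)).
Proof.
move=> Ha Hc qN; case: leqP => /= H.
  by rewrite /sat (minn_idPr _) ?bitn_predn_exp //; have := expn_gt0 2 N; lia.
by rewrite sat_id // bitnD.
Qed.

End Bits.

(** * First-order definability *)

Definition fimp f g := FOr (FNot f) g.
Definition fiff f g := FOr (FAnd f g) (FAnd (FNot f) (FNot g)).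
Definition fxor f g := FNot (fiff f g).

Definition fbelow (ov : option nat) r := if ov is Some v then FLt r v else FTrue.

(* A bit formula [G m r] speaks about the element in variable [r] and may use
   the variables [m], [m.+1], ... as bound variables. *)

Definition fgen_prop (G Pr : nat -> nat -> form) (ov : option nat) (m : nat) : form :=
  FEx m (FAnd (FAnd (fbelow ov m) (G m.+1 m))
    (FAll m.+1 (fimp (FAnd (FLt m m.+1) (fbelow ov m.+1)) (Pr m.+2 m.+1)))).

Definition fgt (A C : nat -> nat -> form) : nat -> form :=
  fgen_prop (fun m r => FAnd (A m r) (FNot (C m r))) (fun m r => fiff (A m r) (C m r)) None.

Definition fle A C m := FNot (fgt A C m).

Definition fcarry (A C : nat -> nat -> form) v : nat -> form :=
  fgen_prop (fun m r => FAnd (A m r) (C m r)) (fun m r => FOr (A m r) (C m r)) (Some v).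

Definition foverflow (A C : nat -> nat -> form) : nat -> form :=
  fgen_prop (fun m r => FAnd (A m r) (C m r)) (fun m r => FOr (A m r) (C m r)) None.

Definition fsat_add (A C : nat -> nat -> form) m v :=
  FOr (foverflow A C m) (fxor (fxor (A m v) (C m v)) (fcarry A C v m)).

Lemma upd_env_eq env x v : upd_env env x v x = v.
Proof. by rewrite /upd_env eqxx. Qed.

Lemma upd_env_neq env x v y : y != x -> upd_env env x v y = env y.
Proof. by rewrite /upd_env => /negPf ->. Qed.

Ltac simpl_upd := repeat match goal with
  | |- context [upd_env ?e ?x ?v ?x] => rewrite (upd_env_eq e x v)
  | |- context [upd_env ?e ?x ?v ?y] => rewrite (@upd_env_neq e x v y); last by lia
  end.

Definition upd_env3 env m a b c := upd_env (upd_env (upd_env env m a) m.+1 b) m.+2 c.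

Lemma upd_env3E env m a b c :
  [/\ upd_env3 env m a b c m = a, upd_env3 env m a b c m.+1 = b,
      upd_env3 env m a b c m.+2 = c & forall u, u < m -> upd_env3 env m a b c u = env u].
Proof. by rewrite /upd_env3; split => *; simpl_upd. Qed.

Section Semantics.
Variables (P : dynprog) (n : nat) (adv : advice) (I : ksinst)
          (A : nat -> seq nat -> bool) (par : seq nat).
Local Notation N := (n + adv_size adv).
Local Notation "env |= f" := (holds P n adv I A par env f) (at level 70).

Lemma holds_and env f g : (env |= FAnd f g) = (env |= f) && (env |= g). Proof. by []. Qed.
Lemma holds_or env f g : (env |= FOr f g) = (env |= f) || (env |= g). Proof. by []. Qed.
Lemma holds_not env f : (env |= FNot f) = ~~ (env |= f). Proof. by []. Qed.
Lemma holds_lt env x y : (env |= FLt x y) = (env x < env y). Proof. by []. Qed.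
Lemma holds_add env x y z : (env |= FAdd x y z) = (env x + env y == env z). Proof. by []. Qed.

Lemma holds_imp env f g : (env |= fimp f g) = (env |= f) ==> (env |= g).
Proof. by rewrite /= implybE. Qed.

Lemma holds_iff env f g : (env |= fiff f g) = ((env |= f) == (env |= g)).
Proof. by rewrite /=; case: (env |= f); case: (env |= g). Qed.

Lemma holds_xor env f g : (env |= fxor f g) = (env |= f) (+) (env |= g).
Proof. by rewrite /fxor holds_not holds_iff; case: (env |= f); case: (env |= g). Qed.

Lemma holds_ex env x g :
  reflect (exists2 v, v < N & upd_env env x v |= g) (env |= FEx x g).
Proof.
by apply: (iffP hasP) => -[v Hv Hg]; exists v => //; move: Hv; rewrite mem_iota.
Qed.

Lemma holds_all env x g :
  reflect (forall v, v < N -> upd_env env x v |= g) (env |= FAll x g).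
Proof. by apply: (iffP allP) => Hg v Hv; apply: Hg; move: Hv; rewrite mem_iota. Qed.

Definition in_universe (env : nat -> nat) := forall u, env u < N.

Lemma in_universe_upd env x v : in_universe env -> v < N -> in_universe (upd_env env x v).
Proof. by move=> Henv Hv u; rewrite /upd_env; case: ifP. Qed.

Lemma in_universe_upd3 env m a b c : in_universe env -> a < N -> b < N -> c < N ->
  in_universe (upd_env3 env m a b c).
Proof. by move=> *; do 3 (apply: in_universe_upd => //). Qed.

Definition agree_below m0 (env env0 : nat -> nat) := forall u, u < m0 -> env u = env0 u.

Lemma agree_below_upd m0 env env0 x v :
  agree_below m0 env env0 -> m0 <= x -> agree_below m0 (upd_env env x v) env0.
Proof. by move=> Ha Hx u Hu; rewrite upd_env_neq ?Ha //; lia. Qed.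

Lemma agree_below_trans m0 m1 env env1 env0 :
  m0 <= m1 -> agree_below m0 env1 env0 -> agree_below m1 env env1 -> agree_below m0 env env0.
Proof. by move=> Hm H1 H2 u Hu; rewrite H2 ?H1 //; lia. Qed.

(* The variables below [m0] are the parameters of [G], with the values given by
   [env0]; [G] may bind any variable from [m0] on. *)
Definition defines_pred m0 env0 (G : nat -> nat -> form) (g : nat -> bool) :=
  forall m r env, m0 <= m -> r < m -> agree_below m0 env env0 -> in_universe env ->
    (env |= G m r) = g (env r).

Definition defines_num m0 env0 G a := defines_pred m0 env0 G (bitn a).

Definition defines_bool m0 env0 (F : nat -> form) (b : bool) :=
  forall m env, m0 <= m -> agree_below m0 env env0 -> in_universe env -> (env |= F m) = b.

Lemma defines_pred_lift m0 env0 G g m1 env1 :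
  defines_pred m0 env0 G g -> m0 <= m1 -> agree_below m0 env1 env0 ->
  defines_pred m1 env1 G g.
Proof.
move=> HG Hm Ha m r env H1 H2 H3 H4; apply: HG => //; first lia.
exact: agree_below_trans Ha H3.
Qed.

Section Connectives.
Variables (m0 : nat) (env0 : nat -> nat) (G1 G2 : nat -> nat -> form) (g1 g2 : nat -> bool).
Hypotheses (HG1 : defines_pred m0 env0 G1 g1) (HG2 : defines_pred m0 env0 G2 g2).

Lemma defines_pred_and :
  defines_pred m0 env0 (fun m r => FAnd (G1 m r) (G2 m r)) (fun x => g1 x && g2 x).
Proof. by move=> m r env *; rewrite holds_and HG1 // HG2. Qed.

Lemma defines_pred_or :
  defines_pred m0 env0 (fun m r => FOr (G1 m r) (G2 m r)) (fun x => g1 x || g2 x).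
Proof. by move=> m r env *; rewrite holds_or HG1 // HG2. Qed.

Lemma defines_pred_not : defines_pred m0 env0 (fun m r => FNot (G1 m r)) (fun x => ~~ g1 x).
Proof. by move=> m r env *; rewrite holds_not HG1. Qed.

Lemma defines_pred_iff :
  defines_pred m0 env0 (fun m r => fiff (G1 m r) (G2 m r)) (fun x => g1 x == g2 x).
Proof. by move=> m r env *; rewrite holds_iff HG1 // HG2. Qed.

End Connectives.

Lemma fgen_prop_sem m0 env0 G Pr g pr ov :
  defines_pred m0 env0 G g -> defines_pred m0 env0 Pr pr ->
  (if ov is Some v then v < m0 else true) -> in_universe env0 ->
  defines_bool m0 env0 (fgen_prop G Pr ov) (gen_prop g pr (if ov is Some v then env0 v else N)).
Proof.
move=> HG HP Hov Hok0 m env Hm Hag Hok.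
move Ebd: (if ov is Some v then env0 v else N) => bd.
have bdN : bd <= N by case: ov Hov Ebd => [v|] /= Hv <- //; exact: ltnW.
have Hbelow env' x : agree_below m0 env' env0 -> in_universe env' ->
    (env' |= fbelow ov x) = (env' x < bd).
  by case: ov Hov Ebd => [v|] /= Hv <- Ha Hok'; [rewrite (Ha v Hv) | rewrite Hok'].
have Ag1 r : agree_below m0 (upd_env env m r) env0 by apply: agree_below_upd.
have Ok1 r : r < N -> in_universe (upd_env env m r) by apply: in_universe_upd.
have Ag2 r t : agree_below m0 (upd_env (upd_env env m r) m.+1 t) env0.
  by apply: agree_below_upd (Ag1 r) _; lia.
have Ok2 r t : r < N -> t < N -> in_universe (upd_env (upd_env env m r) m.+1 t).
  by move=> rN tN; apply: in_universe_upd (Ok1 r rN) tN.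
have E1 r : r < N ->
    (upd_env env m r |= FAnd (fbelow ov m) (G m.+1 m)) = (r < bd) && g r.
  move=> rN; rewrite holds_and (Hbelow _ _ (Ag1 r) (Ok1 r rN)).
  by rewrite (HG m.+1 m _ (leqW Hm) (ltnSn m) (Ag1 r) (Ok1 r rN)) upd_env_eq.
have E2 r t : r < N -> t < N ->
    (upd_env (upd_env env m r) m.+1 t |= fimp (FAnd (FLt m m.+1) (fbelow ov m.+1)) (Pr m.+2 m.+1))
    = (r < t < bd) ==> pr t.
  move=> rN tN; rewrite holds_imp holds_and holds_lt (Hbelow _ _ (Ag2 r t) (Ok2 r t rN tN)).
  rewrite (HP m.+2 m.+1 _ _ (ltnSn _) (Ag2 r t) (Ok2 r t rN tN)); last lia.
  by simpl_upd.
apply/holds_ex/gen_propP => [[r rN]|[r [rb gr Hpr]]].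
  rewrite holds_and E1 // => /andP[/andP[rb gr] /holds_all Hall].
  exists r; split => // t rt tb; have tN : t < N by lia.
  by move: (Hall t tN); rewrite E2 // rt tb.
have rN : r < N by lia.
exists r => //; rewrite holds_and E1 // rb gr; apply/holds_all => t tN.
by rewrite E2 //; apply/implyP => /andP[rt tb]; apply: Hpr.
Qed.

Section Arithmetic.
Variables (m0 : nat) (env0 : nat -> nat) (AG CG : nat -> nat -> form) (a c : nat).
Hypotheses (HA : defines_num m0 env0 AG a) (HC : defines_num m0 env0 CG c).
Hypotheses (Ha : a < 2 ^ N) (Hc : c < 2 ^ N).

Lemma fle_sem : in_universe env0 -> defines_bool m0 env0 (fle AG CG) (a <= c).
Proof.
move=> Hok0 m env Hm Hag Hok; rewrite holds_not leqNgt (ltn_gen_prop Ha Hc).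
congr negb; apply: (fgen_prop_sem (defines_pred_and HA (defines_pred_not HC))
  (defines_pred_iff HA HC) (ov := None)) => //.
Qed.

Lemma fsat_add_sem : defines_num m0 env0 (fsat_add AG CG) (sat N (a + c)).
Proof.
move=> m v env Hm Hv Hag Hok.
have HA' := defines_pred_lift HA Hm Hag; have HC' := defines_pred_lift HC Hm Hag.
have Hgen ov : (if ov is Some v then v < m else true) ->
    (env |= fgen_prop (fun m r => FAnd (AG m r) (CG m r)) (fun m r => FOr (AG m r) (CG m r)) ov m)
    = gen_prop (fun r => bitn a r && bitn c r) (fun r => bitn a r || bitn c r)
               (if ov is Some v then env v else N).
  move=> Hov; exact: (fgen_prop_sem (defines_pred_and HA' HC') (defines_pred_or HA' HC')).
rewrite holds_or !holds_xor (HA' m v env) // (HC' m v env) //.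
rewrite /foverflow /fcarry (Hgen None) // (Hgen (Some v)) //.
by rewrite -overflow_gen_prop // -carry_gen_prop bitn_sat_add.
Qed.

End Arithmetic.

End Semantics.

(** * Formulas over the bit advice *)

(* Advice element [n + a] stands for the number [a <= k]: relation 0 marks the
   advice elements and relation 1 is the bit relation on them. *)
Definition bit_advice (k : nat) : advice :=
  Advice k.+1 (fun r t => if r == 0 then true else if t is [:: a; j] then bitn a j else false).

Definition fadv x := FAdv 0 [:: x].
Definition fadv_bit y z := FAdv 1 [:: y; z].

Definition ffirst_adv z m := FAnd (fadv z) (FAll m (fimp (fadv m) (FNot (FLt m z)))).

(* The bit position [j] is moved into the advice part as the element [n + j]. *)
Definition fbit_of y j m :=
  FEx m (FEx m.+1 (FAnd (FAnd (ffirst_adv m m.+2) (FAdd m j m.+1)) (fadv_bit y m.+1))).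

Definition fencodes (G : nat -> nat -> form) y m := FAll m (fiff (G m.+1 m) (fbit_of y m m.+1)).

Definition fle_adv G y m := FEx m (FAnd (FAnd (fadv m) (FNot (FLt y m))) (fencodes G m m.+1)).

Definition fsplit3 y1 y2 y3 y m :=
  FEx m (FEx m.+1 (FEx m.+2 (FEx m.+3
    (FAnd (FAnd (FAnd (ffirst_adv m m.+4) (FAdd m m.+1 y2))
                (FAnd (FAdd m m.+2 y3) (FAdd y1 m.+1 m.+3)))
          (FAnd (FAdd m.+3 m.+2 y) (FAnd (fadv y1) (FAnd (fadv y2) (fadv y3)))))))).

Definition is_split n y a b c :=
  [&& n <= a, n <= b, n <= c & (a - n) + (b - n) + (c - n) + n == y].

Definition fis_min z m := FAll m (FNot (FLt m z)).
Definition fis_max z m := FAll m (FNot (FLt z m)).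
Definition fin_range x i j := FAnd (FNot (FLt x i)) (FLt x j).
Definition fsucc x x1 m := FAnd (FLt x x1) (FAll m (FNot (FAnd (FLt x m) (FLt m x1)))).

Lemma bit_advice_size k : adv_size (bit_advice k) = k.+1.
Proof. by []. Qed.

Section AdviceFormulas.
Variables (P : dynprog) (n k : nat) (I : ksinst) (A : nat -> seq nat -> bool) (par : seq nat).
Hypothesis HPadv : adv_ar P = [:: 1; 2].
Local Notation adv := (bit_advice k).
Local Notation N := (n + k.+1).
Local Notation "env |= f" := (holds P n adv I A par env f) (at level 70).
Local Notation in_universe := (in_universe n adv).

Lemma in_universe_lt env u : in_universe env -> env u < N.
Proof. by apply. Qed.

Lemma in_universe_upd2 env x v y w : in_universe env -> v < N -> w < N ->
  in_universe (upd_env (upd_env env x v) y w).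
Proof. by move=> Henv vN wN; apply: in_universe_upd => //; apply: in_universe_upd. Qed.

Lemma holds_adv env x : in_universe env -> (env |= fadv x) = (n <= env x).
Proof. by move=> Henv; rewrite /fadv /= HPadv /= Henv !andbT. Qed.

Lemma holds_adv_bit env y z : in_universe env ->
  (env |= fadv_bit y z) = [&& n <= env y, n <= env z & bitn (env y - n) (env z - n)].
Proof. by move=> Henv; rewrite /fadv_bit /= HPadv /= !Henv !andbT andbA. Qed.

Lemma ffirst_adv_sem env z m : z < m -> in_universe env ->
  (env |= ffirst_adv z m) = (env z == n).
Proof.
move=> zm Henv; have nN : n < N by lia.
rewrite /ffirst_adv holds_and holds_adv //; apply/andP/eqP => [[nz /holds_all Hmin]|Ez].
  move: (Hmin n nN); rewrite holds_imp holds_adv ?holds_not ?holds_lt; last first.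
    exact: in_universe_upd.
  by simpl_upd; rewrite leqnn /= -leqNgt => zn; lia.
split; first by rewrite Ez.
apply/holds_all => v vN; rewrite holds_imp holds_adv ?holds_not ?holds_lt; last first.
  exact: in_universe_upd.
by simpl_upd; rewrite Ez -leqNgt; apply/implyP.
Qed.

Lemma fbit_of_sem env y j m : y < m -> j < m -> in_universe env ->
  (env |= fbit_of y j m) = (n <= env y) && bitn (env y - n) (env j).
Proof.
move=> ym jm Henv; have nN : n < N by lia.
apply/idP/andP => [/holds_ex[z0 z0N /holds_ex[z zN]]|[ny b]].
  rewrite 2!holds_and ffirst_adv_sem ?holds_add ?holds_adv_bit; try lia;
    try exact: in_universe_upd2.
  simpl_upd; case/andP => /andP[/eqP E0 /eqP E1] /and3P[ny nz].
  by rewrite ny -E1 E0 addKn.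
have jN : n + env j < N.
  rewrite ltn_add2l ltnNge; apply/negP => kj; move: b; rewrite (@bitn_ge _ k.+1) //.
  apply: leq_trans (ltnW (ltn_expl k.+1 (ltnSn 1))).
  by have := in_universe_lt y Henv; lia.
apply/holds_ex; exists n => //; apply/holds_ex; exists (n + env j) => //.
rewrite 2!holds_and ffirst_adv_sem ?holds_add ?holds_adv_bit; try lia;
  try exact: in_universe_upd2.
by simpl_upd; rewrite !eqxx ny leq_addr addKn b.
Qed.

Lemma fencodes_sem env (G : nat -> nat -> form) a y m :
  defines_num P n adv I A par m env G a -> y < m -> in_universe env -> a < 2 ^ N ->
  (env |= fencodes G y m) = (if n <= env y then a == env y - n else a == 0).
Proof.
move=> HG ym Henv Ha.
have E v : v < N ->
    (upd_env env m v |= fiff (G m.+1 m) (fbit_of y m m.+1)) =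
    (bitn a v == (n <= env y) && bitn (env y - n) v).
  move=> vN; rewrite holds_iff (HG m.+1 m) //; last exact: in_universe_upd.
    by rewrite fbit_of_sem //; [simpl_upd | lia | exact: in_universe_upd].
  exact: agree_below_upd.
have ltN x : x < N -> x < 2 ^ N by move=> xN; apply: leq_trans xN (ltnW (ltn_expl _ _)).
have yN := in_universe_lt y Henv.
apply/holds_all/idP => [Hall|Ha_y v vN]; last first.
  by rewrite E //; case: ifP Ha_y => ny /eqP ->; rewrite /= ?eqxx // bit0n.
case: ifP => ny; apply/eqP; apply: (bitn_inj (N := N)) => //.
- by apply: ltN; lia.
- by move=> q qN; move: (Hall q qN); rewrite E // ny /= => /eqP.
- exact: expn_gt0.
- by move=> q qN; move: (Hall q qN); rewrite E // ny /= bit0n => /eqP.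
Qed.

Lemma fle_adv_sem env G a y m :
  (forall m0 env0, defines_num P n adv I A par m0 env0 G a) ->
  y < m -> in_universe env -> n <= env y -> a < 2 ^ N ->
  (env |= fle_adv G y m) = (a <= env y - n).
Proof.
move=> HG ym Henv ny Ha; have yN := in_universe_lt y Henv.
apply/holds_ex/idP => [[u uN]|ay].
  rewrite !holds_and holds_not holds_lt holds_adv ?(fencodes_sem (HG _ _)) //;
    try exact: in_universe_upd.
  by simpl_upd; case/andP => /andP[nu]; rewrite -leqNgt nu => uy /eqP ->; lia.
exists (n + a); first by rewrite /=; lia.
have Henv' : in_universe (upd_env env m (n + a)) by apply: in_universe_upd => //=; lia.
rewrite !holds_and holds_not holds_lt holds_adv // (fencodes_sem (HG _ _)) //.
by simpl_upd; rewrite leq_addr addKn eqxx /= -leqNgt; lia.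
Qed.

Lemma fsplit3_sem env y1 y2 y3 y m : y1 < m -> y2 < m -> y3 < m -> y < m -> in_universe env ->
  (env |= fsplit3 y1 y2 y3 y m) = is_split n (env y) (env y1) (env y2) (env y3).
Proof.
move=> y1m y2m y3m ym Henv; rewrite /is_split.
have Henv4 a b c d : a < N -> b < N -> c < N -> d < N ->
    in_universe (upd_env (upd_env (upd_env (upd_env env m a) m.+1 b) m.+2 c) m.+3 d).
  by move=> *; apply: in_universe_upd2 => //; apply: in_universe_upd2.
have m4 : m < m.+4 by lia.
have := in_universe_lt y1 Henv; have := in_universe_lt y2 Henv.
have := in_universe_lt y3 Henv; have := in_universe_lt y Henv => yN y3N y2N y1N.
apply/idP/idP => [|/and4P[n1 n2 n3 /eqP E]].
  case/holds_ex => z0 z0N /holds_ex[d2 d2N] /holds_ex[d3 d3N] /holds_ex[u uN].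
  have Henv' := Henv4 _ _ _ _ z0N d2N d3N uN.
  rewrite 3!holds_and (ffirst_adv_sem m4 Henv') !holds_and !holds_add.
  rewrite !holds_adv //; simpl_upd => /andP[/andP[/andP[/eqP E0 /eqP E2] /andP[/eqP E3 /eqP E4]]].
  by case/andP => /eqP E5 /and3P[n1 n2 n3]; rewrite n1 n2 n3 /=; apply/eqP; lia.
apply/holds_ex; exists n; first by rewrite /=; lia.
apply/holds_ex; exists (env y2 - n); first by rewrite /=; lia.
apply/holds_ex; exists (env y3 - n); first by rewrite /=; lia.
apply/holds_ex; exists (env y1 + (env y2 - n)); first by rewrite /=; lia.
have Henv' : in_universe (upd_env (upd_env (upd_env (upd_env env m n) m.+1 (env y2 - n))
                            m.+2 (env y3 - n)) m.+3 (env y1 + (env y2 - n))).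
  by apply: Henv4; lia.
rewrite 3!holds_and (ffirst_adv_sem m4 Henv') !holds_and !holds_add.
rewrite !holds_adv //; simpl_upd; rewrite n1 n2 n3 !andbT.
by repeat (apply/andP; split); try apply/eqP; lia.
Qed.

Lemma fis_min_sem env z m : z < m -> (env |= fis_min z m) = (env z == 0).
Proof.
move=> zm; have N0 : 0 < N by lia.
apply/holds_all/eqP => [/(_ 0 N0)|Ez v vN]; rewrite holds_not holds_lt; simpl_upd; lia.
Qed.

Lemma fis_max_sem env z m : z < m -> in_universe env -> (env |= fis_max z m) = (env z == n + k).
Proof.
move=> zm Henv; have zN := in_universe_lt z Henv.
have kN : n + k < N by lia.
apply/holds_all/eqP => [/(_ _ kN)|Ez v]; rewrite ?bit_advice_size holds_not holds_lt.
  by simpl_upd; lia.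
by move=> vN; simpl_upd; lia.
Qed.

Lemma fin_range_sem env x i j : (env |= fin_range x i j) = (env i <= env x < env j).
Proof. by rewrite /fin_range holds_and holds_not !holds_lt -leqNgt. Qed.

Lemma fsucc_sem env x x1 m : x < m -> x1 < m -> in_universe env ->
  (env |= fsucc x x1 m) = (env x1 == (env x).+1).
Proof.
move=> xm x1m Henv; have := in_universe_lt x Henv; have := in_universe_lt x1 Henv => x1N xN.
rewrite /fsucc holds_and holds_lt; apply/andP/eqP => [[lt /holds_all Hnone]|E].
  have xN' : (env x).+1 < N by lia.
  by move: (Hnone _ xN'); rewrite holds_not holds_and !holds_lt; simpl_upd; lia.
split; first lia.
apply/holds_all => v; rewrite bit_advice_size => vN.
by rewrite holds_not holds_and !holds_lt; simpl_upd; lia.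
Qed.

End AdviceFormulas.

(** * Optimal profits of item intervals *)

Section OptimalProfit.
Variables (n : nat) (I : ksinst).

Definition wsum (S : {set 'I_n}) := \sum_(t in S) ks_w I t.
Definition psum (S : {set 'I_n}) := \sum_(t in S) ks_p I t.

Definition feasible i j b (S : {set 'I_n}) := [forall t in S, i <= t < j] && (wsum S <= b).

Definition opt i j b := \max_(S | feasible i j b S) psum S.

Definition item_value x b := if ks_w I x <= b then ks_p I x else 0.

Lemma leq_opt i j b S : feasible i j b S -> psum S <= opt i j b.
Proof. exact: leq_bigmax_cond. Qed.

Lemma opt_attained i j b : exists2 S, feasible i j b S & psum S = opt i j b.
Proof.
have : 0 < #|[pred S | feasible i j b S]|.
  apply/card_gt0P; exists set0; rewrite inE /feasible /wsum big_set0 andbT.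
  by apply/forall_inP => t; rewrite inE.
by case/(eq_bigmax_cond psum) => S; exists S.
Qed.

Lemma sum_split_at (F : 'I_n -> nat) (S : {set 'I_n}) (x : 'I_n) :
  \sum_(t in S) F t = \sum_(t in S | t < x) F t + (if x \in S then F x else 0)
                      + \sum_(t in S | x < t) F t.
Proof.
rewrite (bigID (fun t : 'I_n => t < x)) /= -addnA; congr (_ + _).
rewrite (bigID (fun t : 'I_n => t == x)) /=; congr (_ + _).
  case: ifP => xS; last first.
    by rewrite big1 // => t /andP[/andP[tS _] /eqP tx]; rewrite -tx tS in xS.
  rewrite (big_pred1 x) // => t /=; case: (t =P x) => [->|_]; by rewrite ?xS ?ltnn ?andbF.
apply: eq_bigl => t; rewrite -(inj_eq val_inj) /=.
by case: (t \in S) => //=; lia.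
Qed.

Lemma opt_split_ge i j (x : 'I_n) b1 b2 b3 : i <= x < j ->
  opt i x b1 + item_value x b2 + opt x.+1 j b3 <= opt i j (b1 + b2 + b3).
Proof.
move=> /andP[ix xj].
case: (opt_attained i x b1) => SL /andP[/forall_inP FL WL] <-.
case: (opt_attained x.+1 j b3) => SR /andP[/forall_inP FR WR] <-.
set Sx : {set 'I_n} := if ks_w I x <= b2 then [set x] else set0.
set S := SL :|: Sx :|: SR.
have inS t : t \in S = [|| t \in SL, (ks_w I x <= b2) && (t == x) | t \in SR].
  by rewrite !inE orbA /Sx; case: ifP; rewrite ?inE.
have FL' t : t \in SL -> i <= t < x by apply: FL.
have FR' t : t \in SR -> x < t < j by apply: FR.
have eqL (F : 'I_n -> nat) : \sum_(t in S | t < x) F t = \sum_(t in SL) F t.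
  apply: eq_bigl => t; rewrite inS -(inj_eq val_inj) /=.
  by move: (FL' t) (FR' t); case: (t \in SL); case: (t \in SR); case: (_ <= b2) => /=; lia.
have eqR (F : 'I_n -> nat) : \sum_(t in S | x < t) F t = \sum_(t in SR) F t.
  apply: eq_bigl => t; rewrite inS -(inj_eq val_inj) /=.
  by move: (FL' t) (FR' t); case: (t \in SL); case: (t \in SR); case: (_ <= b2) => /=; lia.
have xS : (x \in S) = (ks_w I x <= b2).
  by rewrite inS eqxx andbT; move: (FL' x) (FR' x); case: (x \in SL); case: (x \in SR) => /=; lia.
have -> : psum SL + item_value x b2 + psum SR = psum S.
  by rewrite /psum (sum_split_at _ S x) eqL eqR xS.
apply: leq_opt; apply/andP; split.
  apply/forall_inP => t; rewrite inS => /or3P[/FL'|/andP[_ /eqP->]|/FR']; lia.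
by rewrite /wsum (sum_split_at _ S x) eqL eqR xS; move: WL WR; rewrite /wsum; case: ifP; lia.
Qed.

Lemma opt_split_le i j (x : 'I_n) b : i <= x < j ->
  exists b1 b2 b3, b1 + b2 + b3 = b /\
    opt i j b <= opt i x b1 + item_value x b2 + opt x.+1 j b3.
Proof.
move=> /andP[ix xj].
case: (opt_attained i j b) => S /andP[/forall_inP FS WS] <-.
set SL := [set t in S | t < x]; set SR := [set t in S | x < t].
have eqL (F : 'I_n -> nat) : \sum_(t in S | t < x) F t = \sum_(t in SL) F t.
  by apply: eq_bigl => t; rewrite inE.
have eqR (F : 'I_n -> nat) : \sum_(t in S | x < t) F t = \sum_(t in SR) F t.
  by apply: eq_bigl => t; rewrite inE.
set b2 := if x \in S then ks_w I x else 0.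
have Ew : wsum S = wsum SL + b2 + wsum SR by rewrite /wsum (sum_split_at _ _ x) eqL eqR.
exists (wsum SL), b2, (b - wsum SL - b2); split; first by move: WS; rewrite Ew; lia.
have HL : psum SL <= opt i x (wsum SL).
  apply: leq_opt; rewrite /feasible leqnn andbT; apply/forall_inP => t.
  by rewrite inE => /andP[/FS + tx]; rewrite tx andbT; case/andP.
have HR : psum SR <= opt x.+1 j (b - wsum SL - b2).
  apply: leq_opt; apply/andP; split; last by move: WS; rewrite Ew; lia.
  by apply/forall_inP => t; rewrite inE => /andP[/FS + xt]; rewrite xt; case/andP.
have HX : (if x \in S then ks_p I x else 0) <= item_value x b2.
  by rewrite /item_value /b2; case: (x \in S); rewrite ?leqnn.
by rewrite /psum (sum_split_at _ _ x) eqL eqR -!/(psum _); lia.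
Qed.

End OptimalProfit.

Lemma opt_local n I I' i j b :
  (forall t, i <= t < j -> ks_p I t = ks_p I' t /\ ks_w I t = ks_w I' t) ->
  opt n I i j b = opt n I' i j b.
Proof.
move=> HII'.
have sumE (F G : nat -> nat) (S : {set 'I_n}) : [forall t in S, i <= t < j] ->
    (forall t, i <= t < j -> F t = G t) -> \sum_(t in S) F t = \sum_(t in S) G t.
  by move=> /forall_inP HS HFG; apply: eq_bigr => t /HS; apply: HFG.
have feasE (S : {set 'I_n}) : feasible I i j b S = feasible I' i j b S.
  rewrite /feasible; case: (boolP [forall t in S, i <= t < j]) => //= HS.
  by rewrite /wsum (sumE _ (ks_w I') _ HS) // => t /HII'[].
rewrite /opt (eq_bigl _ _ feasE); apply: eq_bigr => S /andP[HS _].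
by rewrite /psum (sumE _ (ks_p I') _ HS) // => t /HII'[].
Qed.

Lemma opt_change_out n I (x : 'I_n) p w i j b : ~~ (i <= x < j) ->
  opt n (apply_change (CItem x p w) I) i j b = opt n I i j b.
Proof.
move=> Hx; apply: opt_local => t tij /=.
by case: eqP => // Etx; move: Hx; rewrite -Etx tij.
Qed.

Lemma opt_empty n i j b : opt n ks_empty i j b = 0.
Proof. by apply/eqP; rewrite -leqn0; apply/bigmax_leqP => S _; rewrite /psum big1. Qed.

Lemma knapsack_opt n I M : n <= M -> knapsack n I = (ks_T I <= opt n I 0 M (ks_B I)).
Proof.
move=> nM; apply/existsP/idP => [[S /andP[HT HB]]|].
  apply: leq_trans HT (leq_opt _); rewrite /feasible HB andbT.
  by apply/forall_inP => t _ /=; exact: leq_trans (ltn_ord t) nM.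
by case: (opt_attained n I 0 M (ks_B I)) => S /andP[_ HB] <- HT; exists S; rewrite HT.
Qed.

(** * The auxiliary relation and its update *)

(* Cell [C(i, j, y, q)] holds bit [q] of [cell_value]; the capacity [y - n] is
   encoded by the advice element [y]. *)
Definition cell_value n k I i j y :=
  if n <= y then sat (n + k.+1) (opt n I i j (y - n)) else 0.

Lemma cell_value_lt n k I i j y : cell_value n k I i j y < 2 ^ (n + k.+1).
Proof. by rewrite /cell_value; case: ifP => _; [exact: sat_lt | exact: expn_gt0]. Qed.

Section SplitValue.
Variables (n k : nat) (I : ksinst) (p w : nat).
Local Notation N := (n + k.+1).

Definition split_value i x j a b c :=
  sat N (cell_value n k I i x a + (if w <= b - n then p else 0) + cell_value n k I x.+1 j c).

Variable xo : 'I_n.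
Local Notation I' := (apply_change (CItem xo p w) I).

Lemma split_value_opt i j a b c : i <= xo < j -> n <= a -> n <= c ->
  split_value i xo j a b c =
  sat N (opt n I' i xo (a - n) + item_value I' xo (b - n) + opt n I' xo.+1 j (c - n)).
Proof.
move=> /andP[ixo xoj] na nc; rewrite /split_value /cell_value na nc sat_sat3.
by rewrite /item_value /= eqxx !opt_change_out //; lia.
Qed.

Lemma split_value_le i j y a b c : i <= xo < j -> is_split n y a b c ->
  split_value i xo j a b c <= sat N (opt n I' i j (y - n)).
Proof.
move=> Hr /and4P[na nb nc /eqP Ey]; rewrite split_value_opt //; apply: leq_sat.
have -> : y - n = (a - n) + (b - n) + (c - n) by lia.
exact: opt_split_ge.
Qed.

Lemma split_value_attained i j y : i <= xo < j -> n <= y -> y < N ->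
  exists a b c, [/\ a < N, b < N, c < N, is_split n y a b c &
                    split_value i xo j a b c = sat N (opt n I' i j (y - n))].
Proof.
move=> Hr ny yN; case: (opt_split_le I' (y - n) Hr) => b1 [b2 [b3 [Eb Hle]]].
have Hs : is_split n y (n + b1) (n + b2) (n + b3).
  by rewrite /is_split !leq_addr /= !addKn; apply/eqP; lia.
exists (n + b1), (n + b2), (n + b3); split => //; try lia.
apply/eqP; rewrite eqn_leq split_value_le //= split_value_opt ?leq_addr // !addKn.
exact: leq_sat.
Qed.

End SplitValue.

Definition fcell_old xi xj xy : nat -> nat -> form := fun _ v => FAux 1 [:: xi; xj; xy; v].

Definition fcell_right x xj xy : nat -> nat -> form :=
  fun m v => FEx m (FAnd (fsucc x m m.+1) (FAux 1 [:: m; xj; xy; v])).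

Definition fitem y : nat -> nat -> form :=
  fun m v => FAnd (fle_adv (fun _ v => FPar 1 v) y m) (FPar 0 v).

Definition fsum3 x xi xj a b c :=
  fsat_add (fsat_add (fcell_old xi x a) (fitem b)) (fcell_right x xj c).

Definition fbest_split x xi xj xy a b c m :=
  FAll m (FAll m.+1 (FAll m.+2 (fimp (fsplit3 m m.+1 m.+2 xy m.+3)
    (fle (fsum3 x xi xj m m.+1 m.+2) (fsum3 x xi xj a b c) m.+3)))).

Definition fcell_split x xi xj xy m v :=
  FEx m (FEx m.+1 (FEx m.+2 (FAnd (FAnd (fsplit3 m m.+1 m.+2 xy m.+3)
                                        (fbest_split x xi xj xy m m.+1 m.+2 m.+3))
                                  (fsum3 x xi xj m m.+1 m.+2 m.+3 v)))).

Definition fcell_new x xi xj xy : nat -> nat -> form := fun m v =>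
  FAnd (fadv xy) (FOr (FAnd (fin_range x xi xj) (fcell_split x xi xj xy m v))
                      (FAnd (FNot (fin_range x xi xj)) (FAux 1 [:: xi; xj; xy; v]))).

Section CellFormulas.
Variables (P : dynprog) (n k : nat) (I : ksinst) (A : nat -> seq nat -> bool) (par : seq nat).
Hypotheses (HPadv : adv_ar P = [:: 1; 2]) (HPaux : aux_ar P = [:: 0; 4]).
Local Notation adv := (bit_advice k).
Local Notation N := (n + k.+1).
Local Notation cell := (cell_value n k).
Local Notation "env |= f" := (holds P n adv I A par env f) (at level 70).
Local Notation in_universe := (in_universe n adv).
Local Notation defines_num := (defines_num P n adv I A par).
Local Notation p := (nth 0 par 0).
Local Notation w := (nth 0 par 1).
Local Notation split_value := (split_value n k I p w).
Hypothesis HA : forall i j y q, i < N -> j < N -> y < N -> q < N ->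
  A 1 [:: i; j; y; q] = bitn (cell I i j y) q.

Lemma holds_cell env a b c d : in_universe env ->
  (env |= FAux 1 [:: a; b; c; d]) = bitn (cell I (env a) (env b) (env c)) (env d).
Proof. by move=> Henv; rewrite /= HPaux /= !Henv /=; exact: HA. Qed.

Lemma fcell_old_sem m0 env0 xi xj xy : xi < m0 -> xj < m0 -> xy < m0 ->
  defines_num m0 env0 (fcell_old xi xj xy) (cell I (env0 xi) (env0 xj) (env0 xy)).
Proof.
move=> ? ? ? m v env Hm Hv Hag Henv.
by rewrite /fcell_old holds_cell // (Hag xi) // (Hag xj) // (Hag xy).
Qed.

Lemma fcell_right_sem m0 env0 x xj xy : x < m0 -> xj < m0 -> xy < m0 -> env0 x < n ->
  defines_num m0 env0 (fcell_right x xj xy) (cell I (env0 x).+1 (env0 xj) (env0 xy)).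
Proof.
move=> xm xjm xym xn m v env Hm Hv Hag Henv.
have E u : u < N -> (upd_env env m u |= FAnd (fsucc x m m.+1) (FAux 1 [:: m; xj; xy; v])) =
    (u == (env x).+1) && bitn (cell I u (env xj) (env xy)) (env v).
  move=> uN; rewrite holds_and fsucc_sem ?holds_cell; try lia; try exact: in_universe_upd.
  by simpl_upd.
rewrite -(Hag x) // -(Hag xj) // -(Hag xy) //; rewrite -(Hag x) // in xn.
apply/holds_ex/idP => [[u uN]|b]; first by rewrite E // => /andP[/eqP ->].
by exists (env x).+1; [rewrite /=; lia | rewrite E ?eqxx //; lia].
Qed.

Section ChangedItem.
Hypotheses (Hp : p < 2 ^ n) (Hw : w < 2 ^ n).

Lemma fitem_sem m0 env0 y : y < m0 -> n <= env0 y ->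
  defines_num m0 env0 (fitem y) (if w <= env0 y - n then p else 0).
Proof.
move=> ym ny m v env Hm Hv Hag Henv.
have Hw' : w < 2 ^ N := ltn_trans Hw (exp_lt_addS n k).
have ny' : n <= env y by rewrite Hag.
have HG m1 env1 : defines_num m1 env1 (fun _ v => FPar 1 v) w by [].
rewrite /fitem holds_and (fle_adv_sem HPadv HG (leq_trans ym Hm) Henv ny' Hw') (Hag y) //.
by case: ifP => _ //=; rewrite bit0n.
Qed.

Lemma fsum3_sem m0 env0 x xi xj a b c :
  x < m0 -> xi < m0 -> xj < m0 -> a < m0 -> b < m0 -> c < m0 -> env0 x < n -> n <= env0 b ->
  defines_num m0 env0 (fsum3 x xi xj a b c)
    (split_value (env0 xi) (env0 x) (env0 xj) (env0 a) (env0 b) (env0 c)).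
Proof.
move=> xm xim xjm am bm cm xn nb; rewrite /split_value -sat_addl.
have Hitem : (if w <= env0 b - n then p else 0) < 2 ^ N.
  by case: ifP => _; [exact: ltn_trans Hp (exp_lt_addS n k) | exact: expn_gt0].
apply: fsat_add_sem; [apply: fsat_add_sem | | exact: sat_lt | exact: cell_value_lt].
- exact: fcell_old_sem.
- exact: fitem_sem.
- exact: cell_value_lt.
- exact: Hitem.
- exact: fcell_right_sem.
Qed.

Lemma holds_sum3 env x xi xj a b c m v :
  x < m -> xi < m -> xj < m -> a < m -> b < m -> c < m -> v < m ->
  env x < n -> n <= env b -> in_universe env ->
  (env |= fsum3 x xi xj a b c m v) =
  bitn (split_value (env xi) (env x) (env xj) (env a) (env b) (env c)) (env v).
Proof.
move=> xm xim xjm am bm cm vm xn nb Henv.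
exact: (fsum3_sem xm xim xjm am bm cm xn nb (leqnn m) vm (fun _ _ => erefl) Henv).
Qed.

Lemma fbest_split_sem env x xi xj xy a b c m :
  x < m -> xi < m -> xj < m -> xy < m -> a < m -> b < m -> c < m ->
  env x < n -> n <= env b -> in_universe env ->
  reflect (forall a' b' c', a' < N -> b' < N -> c' < N -> is_split n (env xy) a' b' c' ->
             split_value (env xi) (env x) (env xj) a' b' c' <=
             split_value (env xi) (env x) (env xj) (env a) (env b) (env c))
          (env |= fbest_split x xi xj xy a b c m).
Proof.
move=> xm xim xjm xym am bm cm xn nb Henv.
have inner a' b' c' : a' < N -> b' < N -> c' < N ->
    (upd_env3 env m a' b' c' |= fimp (fsplit3 m m.+1 m.+2 xy m.+3)
       (fle (fsum3 x xi xj m m.+1 m.+2) (fsum3 x xi xj a b c) m.+3)) =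
    is_split n (env xy) a' b' c' ==>
      (split_value (env xi) (env x) (env xj) a' b' c' <=
       split_value (env xi) (env x) (env xj) (env a) (env b) (env c)).
  move=> aN bN cN; have := in_universe_upd3 m Henv aN bN cN; have := upd_env3E env m a' b' c'.
  move: (upd_env3 env m a' b' c') => env' [Ea Eb Ec Eenv] Henv'.
  rewrite holds_imp fsplit3_sem //; try lia.
  rewrite Ea Eb Ec Eenv //; case Hs: is_split => //; rewrite !implyTb.
  have nb' : n <= b' by case/and4P: Hs.
  have env'x : env' x < n by rewrite Eenv.
  have S1 := fsum3_sem (m0 := m.+3) (env0 := env') (x := x) (xi := xi) (xj := xj)
    (a := m) (b := m.+1) (c := m.+2) ltac:(lia) ltac:(lia) ltac:(lia) ltac:(lia) ltac:(lia)
    ltac:(lia) env'x ltac:(by rewrite Eb).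
  have S2 := fsum3_sem (m0 := m.+3) (env0 := env') (x := x) (xi := xi) (xj := xj)
    (a := a) (b := b) (c := c) ltac:(lia) ltac:(lia) ltac:(lia) ltac:(lia) ltac:(lia) ltac:(lia)
    env'x ltac:(by rewrite Eenv).
  rewrite (fle_sem S1 S2 (sat_lt _ _) (sat_lt _ _) Henv' (leqnn _) (fun _ _ => erefl) Henv').
  by rewrite Ea Eb Ec !Eenv.
apply: (iffP idP) => [/holds_all Hall a' b' c' aN bN cN Hs|Hbest].
  move: (Hall a' aN) => /holds_all /(_ b' bN) /holds_all /(_ c' cN).
  by rewrite -/(upd_env3 env m a' b' c') inner // Hs.
apply/holds_all => a' aN; apply/holds_all => b' bN; apply/holds_all => c' cN.
by rewrite -/(upd_env3 env m a' b' c') inner //; apply/implyP; exact: Hbest.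
Qed.

Lemma fcell_splitP env x xi xj xy m v :
  x < m -> xi < m -> xj < m -> xy < m -> v < m -> env x < n -> in_universe env ->
  reflect (exists a b c, [/\ [&& a < N, b < N & c < N], is_split n (env xy) a b c,
             (forall a' b' c', a' < N -> b' < N -> c' < N -> is_split n (env xy) a' b' c' ->
                split_value (env xi) (env x) (env xj) a' b' c' <=
                split_value (env xi) (env x) (env xj) a b c) &
             bitn (split_value (env xi) (env x) (env xj) a b c) (env v)])
          (env |= fcell_split x xi xj xy m v).
Proof.
move=> xm xim xjm xym vm xn Henv.
have Hbody a b c : a < N -> b < N -> c < N ->
    reflect [/\ is_split n (env xy) a b c,
             (forall a' b' c', a' < N -> b' < N -> c' < N -> is_split n (env xy) a' b' c' ->
                split_value (env xi) (env x) (env xj) a' b' c' <=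
                split_value (env xi) (env x) (env xj) a b c) &
             bitn (split_value (env xi) (env x) (env xj) a b c) (env v)]
      (upd_env3 env m a b c |= FAnd (FAnd (fsplit3 m m.+1 m.+2 xy m.+3)
         (fbest_split x xi xj xy m m.+1 m.+2 m.+3)) (fsum3 x xi xj m m.+1 m.+2 m.+3 v)).
  move=> aN bN cN; have := in_universe_upd3 m Henv aN bN cN; have := upd_env3E env m a b c.
  move: (upd_env3 env m a b c) => env' [Ea Eb Ec Eenv] Henv'.
  rewrite 2!holds_and fsplit3_sem //; try lia.
  rewrite Ea Eb Ec Eenv //.
  case Hs: is_split; last by constructor => -[].
  have nb : n <= env' m.+1 by rewrite Eb; case/and4P: Hs.
  have env'x : env' x < n by rewrite Eenv.
  have Hbest := fbest_split_sem (m := m.+3) (x := x) (a := m) (b := m.+1) (c := m.+2)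
    (xi := xi) (xj := xj) (xy := xy) ltac:(lia) ltac:(lia) ltac:(lia) ltac:(lia) ltac:(lia)
    ltac:(lia) ltac:(lia) env'x nb Henv'.
  rewrite ?Ea ?Eb ?Ec ?Eenv // in Hbest.
  rewrite holds_sum3 ?Ea ?Eb ?Ec ?Eenv //; try lia.
  by apply: (iffP andP) => [[/Hbest]|[_ /Hbest]].
apply: (iffP idP) => [/holds_ex[a aN /holds_ex[b bN /holds_ex[c cN]]]|[a [b [c []]]]].
  by rewrite -/(upd_env3 env m a b c) => /Hbody[] // *; exists a, b, c; rewrite aN bN cN.
move=> /and3P[aN bN cN] Hs Hbest Hbit; apply/holds_ex; exists a => //.
apply/holds_ex; exists b => //.
by apply/holds_ex; exists c => //; apply/Hbody.
Qed.

Section CellUpdate.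
Variable xo : 'I_n.
Local Notation I' := (apply_change (CItem xo p w) I).

Lemma fcell_split_sem (env : nat -> nat) x xi xj xy m v :
  x < m -> xi < m -> xj < m -> xy < m -> v < m -> env x = xo -> in_universe env ->
  env xi <= xo < env xj -> n <= env xy ->
  (env |= fcell_split x xi xj xy m v) =
  bitn (sat N (opt n I' (env xi) (env xj) (env xy - n))) (env v).
Proof.
move=> xm xim xjm xym vm Ex Henv Hr ny; have xn : env x < n by rewrite Ex.
have [a0 [b0 [c0 [aN0 bN0 cN0 Hs0 E0]]]] := split_value_attained I p w Hr ny (Henv xy).
apply/fcell_splitP/idP; rewrite ?Ex //.
  move=> [a [b [c [_ Hs Hbest]]]].
  suff -> : sat N (opt n I' (env xi) (env xj) (env xy - n)) =
            split_value (env xi) xo (env xj) a b c by [].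
  by apply/eqP; rewrite eqn_leq split_value_le // -E0 Hbest.
move=> Hbit; exists a0, b0, c0; split; rewrite ?aN0 ?bN0 ?cN0 ?E0 //.
by move=> a' b' c' _ _ _; apply: split_value_le.
Qed.

Lemma fcell_new_sem m0 (env0 : nat -> nat) x xi xj xy :
  x < m0 -> xi < m0 -> xj < m0 -> xy < m0 -> env0 x = xo ->
  defines_num m0 env0 (fcell_new x xi xj xy) (cell I' (env0 xi) (env0 xj) (env0 xy)).
Proof.
move=> xm xim xjm xym Ex m v env Hm Hv Hag Henv.
rewrite -(Hag xi) // -(Hag xj) // -(Hag xy) //; rewrite -(Hag x) // in Ex.
rewrite /fcell_new holds_and holds_adv // holds_or holds_and fin_range_sem.
rewrite holds_and holds_not fin_range_sem holds_cell // /cell_value Ex.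
case: (leqP n (env xy)) => [ny|]; last by rewrite bit0n.
case: (boolP (env xi <= xo < env xj)) => Hr; last by rewrite opt_change_out.
by rewrite (fcell_split_sem (x := x) (xy := xy) (m := m) (v := v) _ _ _ _ _ Ex Henv Hr ny)
  /= ?orbF //; lia.
Qed.

End CellUpdate.

End ChangedItem.

End CellFormulas.

Definition fquery (BG TG : nat -> nat -> form) (CG : nat -> nat -> nat -> nat -> nat -> form) o :=
  FEx o (FEx o.+1 (FEx o.+2 (FAnd (FAnd (FAnd (fis_min o o.+3) (fis_max o.+1 o.+3))
                                        (FAnd (fadv o.+2) (fencodes BG o.+2 o.+3)))
                                  (fle TG (CG o o.+1 o.+2) o.+3)))).

Section QueryFormula.
Variables (P : dynprog) (n k : nat) (I : ksinst) (A : nat -> seq nat -> bool) (par : seq nat).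
Hypothesis HPadv : adv_ar P = [:: 1; 2].
Local Notation adv := (bit_advice k).
Local Notation N := (n + k.+1).
Local Notation "env |= f" := (holds P n adv I A par env f) (at level 70).
Local Notation in_universe := (in_universe n adv).
Local Notation defines_num := (defines_num P n adv I A par).

Lemma fquery_sem env BG TG CG o b t I2 :
  (forall m0 env0, defines_num m0 env0 BG b) -> (forall m0 env0, defines_num m0 env0 TG t) ->
  b < 2 ^ n -> t < 2 ^ n -> b <= k ->
  (forall env', agree_below o env' env -> in_universe env' ->
     defines_num o.+3 env' (CG o o.+1 o.+2)
       (cell_value n k I2 (env' o) (env' o.+1) (env' o.+2))) ->
  in_universe env ->
  (env |= fquery BG TG CG o) = (t <= opt n I2 0 (n + k) b).
Proof.
move=> HB HT Hb Ht bk HC Henv.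
have ltN x : x < 2 ^ n -> x < 2 ^ N by move=> Hx; apply: ltn_trans Hx (exp_lt_addS n k).
have E a b' c : a < N -> b' < N -> c < N ->
   (upd_env3 env o a b' c |= FAnd (FAnd (FAnd (fis_min o o.+3) (fis_max o.+1 o.+3))
                                        (FAnd (fadv o.+2) (fencodes BG o.+2 o.+3)))
                                  (fle TG (CG o o.+1 o.+2) o.+3))
   = [&& a == 0, b' == n + k, n <= c, b == c - n & t <= cell_value n k I2 a b' c].
  move=> aN bN cN; have := in_universe_upd3 o Henv aN bN cN; have := upd_env3E env o a b' c.
  move: (upd_env3 env o a b' c) => env' [Ea Eb Ec Eenv] Henv'.
  have Ag : agree_below o env' env by move=> u /Eenv.
  have Emin : (env' |= fis_min o o.+3) = (env' o == 0) by apply: fis_min_sem; lia.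
  have Emax : (env' |= fis_max o.+1 o.+3) = (env' o.+1 == n + k).
    by apply: fis_max_sem => //; lia.
  have Eenc : (env' |= fencodes BG o.+2 o.+3) =
              (if n <= env' o.+2 then b == env' o.+2 - n else b == 0).
    by apply: fencodes_sem => //; exact: ltN.
  rewrite !holds_and Emin Emax holds_adv // Eenc.
  rewrite (fle_sem (HT _ _) (HC _ Ag Henv') (ltN _ Ht) (cell_value_lt _ _ _ _ _ _) Henv'
             (leqnn _) (fun _ _ => erefl) Henv').
  by rewrite Ea Eb Ec; case: (a == 0); case: (b' == n + k); case: (n <= c).
apply/holds_ex/idP => [[a aN /holds_ex[b' bN /holds_ex[c cN]]]|Ht_opt].
  rewrite -/(upd_env3 env o a b' c) E // => /and5P[/eqP-> /eqP-> nc /eqP->].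
  by rewrite /cell_value nc leq_sat_small // ltN.
exists 0; first by rewrite /=; lia.
apply/holds_ex; exists (n + k); first by rewrite /=; lia.
apply/holds_ex; exists (n + b); first by rewrite /=; lia.
rewrite -/(upd_env3 env o 0 (n + k) (n + b)) E; try lia.
by rewrite !eqxx leq_addr addKn eqxx /cell_value leq_addr addKn leq_sat_small // ltN.
Qed.

End QueryFormula.

Definition finput_B : nat -> nat -> form := fun _ v => FInp SB [:: v].
Definition finput_T : nat -> nat -> form := fun _ v => FInp ST [:: v].
Definition fparam0 : nat -> nat -> form := fun _ v => FPar 0 v.

Section InputFormulas.
Variables (P : dynprog) (n : nat) (adv : advice) (I : ksinst)
          (A : nat -> seq nat -> bool) (par : seq nat).

Lemma finput_B_sem : ks_B I < 2 ^ n ->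
  forall m0 env0, defines_num P n adv I A par m0 env0 finput_B (ks_B I).
Proof. by move=> HB m0 env0 m r env *; rewrite /=; case: ltnP => //= /(bitn_ge HB) ->. Qed.

Lemma finput_T_sem : ks_T I < 2 ^ n ->
  forall m0 env0, defines_num P n adv I A par m0 env0 finput_T (ks_T I).
Proof. by move=> HT m0 env0 m r env *; rewrite /=; case: ltnP => //= /(bitn_ge HT) ->. Qed.

Lemma fparam0_sem m0 env0 : defines_num P n adv I A par m0 env0 fparam0 (nth 0 par 0).
Proof. by []. Qed.

End InputFormulas.

(* For an item change, variable 0 holds the changed item and the tuple
   [(i, j, y, q)] of relation 1 occupies variables 1 to 4; the other changes
   have no element parameter. Updates read the old state, so after an item
   change the query evaluates the new cells through [fcell_new]. *)
Definition knapsack_update (kd : ckind) (r : nat) : form :=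
  match kd with
  | KItem => if r == 0 then fquery finput_B finput_T (fcell_new 0) 1 else fcell_new 0 1 2 3 5 4
  | KB => if r == 0 then fquery fparam0 finput_T fcell_old 0 else FAux 1 [:: 0; 1; 2; 3]
  | KT => if r == 0 then fquery finput_B fparam0 fcell_old 0 else FAux 1 [:: 0; 1; 2; 3]
  end.

Definition knapsack_prog : dynprog := DynProg [:: 0; 4] [:: 1; 2] knapsack_update.

Lemma run_rcons P n adv cs (c : change n) :
  run P adv (rcons cs c) = step P adv (run P adv cs) c.
Proof. by rewrite /run foldl_rcons. Qed.

Lemma run_fst P n adv (cs : seq (change n)) : (run P adv cs).1 = run_input cs.
Proof.
elim/last_ind: cs => [//|cs c IH].
by rewrite run_rcons /run_input foldl_rcons /= IH.
Qed.

Section Correctness.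
Variables (n k : nat).
Local Notation adv := (bit_advice k).
Local Notation N := (n + k.+1).
Local Notation step := (step knapsack_prog adv).
Local Notation holds := (holds knapsack_prog n adv).

Definition bounded (I : ksinst) :=
  [/\ forall t, ks_p I t < 2 ^ n, forall t, ks_w I t < 2 ^ n, ks_B I < 2 ^ n & ks_T I < 2 ^ n].

Definition cells_correct (st : pstate) :=
  forall i j y q, i < N -> j < N -> y < N -> q < N ->
    st.2 1 [:: i; j; y; q] = bitn (cell_value n k st.1 i j y) q.

Lemma bounded_empty : bounded ks_empty.
Proof. by split => // *; exact: expn_gt0. Qed.

Lemma bounded_step I (c : change n) : bounded I -> valid_change c -> bounded (apply_change c I).
Proof.
by case=> Hp Hw HB HT; case: c => [i p w /andP[hp hw]|b hb|t ht]; split => //= t'; case: ifP.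
Qed.

Lemma cells_correct_empty : cells_correct (ks_empty, empty_aux).
Proof. by move=> *; rewrite /cell_value opt_empty /sat min0n; case: ifP; rewrite bit0n. Qed.

Lemma in_universe_nth s : all (fun v => v < N) s -> in_universe n adv (fun x => nth 0 s x).
Proof.
move=> Hs u; case: (ltnP u (size s)) => hu; first by apply: (allP Hs); exact: mem_nth.
by rewrite nth_default //= addnS.
Qed.

Lemma step_cell st (c : change n) vs : size vs = 4 -> all (fun v => v < N) vs ->
  (step st c).2 1 vs = holds st.1 st.2 (change_nums c) (fun x => nth 0 (change_elems c ++ vs) x)
                             (knapsack_update (change_kind c) 1).
Proof. by move=> Hs Hvs; rewrite /= Hs Hvs. Qed.

Lemma step_query st (c : change n) :
  query_rel (step st c) = holds st.1 st.2 (change_nums c) (fun x => nth 0 (change_elems c) x)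
                                (knapsack_update (change_kind c) 0).
Proof. by rewrite /query_rel /= cats0. Qed.

Lemma fcell_new_prog_sem st (x : 'I_n) p w (env0 : nat -> nat) :
  cells_correct st -> p < 2 ^ n -> w < 2 ^ n -> env0 0 = x ->
  defines_num knapsack_prog n adv st.1 st.2 [:: p; w] 4 env0 (fcell_new 0 1 2 3)
    (cell_value n k (apply_change (CItem x p w) st.1) (env0 1) (env0 2) (env0 3)).
Proof.
move=> Hcells hp hw Ex.
exact: (fcell_new_sem (P := knapsack_prog) (par := [:: p; w]) erefl erefl Hcells hp hw
          (m0 := 4) (x := 0) (xi := 1) (xj := 2) (xy := 3) isT isT isT isT Ex).
Qed.

Lemma fcell_old_prog_sem st par env0 : cells_correct st ->
  defines_num knapsack_prog n adv st.1 st.2 par 3 env0 (fcell_old 0 1 2)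
    (cell_value n k st.1 (env0 0) (env0 1) (env0 2)).
Proof. by move=> Hcells; apply: (fcell_old_sem (P := knapsack_prog) par erefl Hcells). Qed.

Lemma cells_correct_step st (c : change n) :
  cells_correct st -> valid_change c -> cells_correct (step st c).
Proof.
move=> Hcells Hc i j y q iN jN yN qN.
have Hvs : all (fun v => v < N) [:: i; j; y; q] by rewrite /= iN jN yN qN.
rewrite step_cell //; case: c Hc => [x p w /andP[hp hw]|b _|t _].
- pose env u := nth 0 ([:: val x] ++ [:: i; j; y; q]) u.
  have Henv : in_universe n adv env.
    by apply: in_universe_nth; rewrite /= iN jN yN qN !andbT; have := ltn_ord x; lia.
  exact: (fcell_new_prog_sem Hcells hp hw (erefl : env 0 = x) (m := 5) (r := 4) isT isT
           (fun _ _ => erefl) Henv).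
- exact: (holds_cell (P := knapsack_prog) [:: b] erefl Hcells 0 1 2 3 (in_universe_nth Hvs)).
- exact: (holds_cell (P := knapsack_prog) [:: t] erefl Hcells 0 1 2 3 (in_universe_nth Hvs)).
Qed.

Lemma query_step st (c : change n) :
  bounded st.1 -> cells_correct st -> valid_change c -> ks_B (apply_change c st.1) <= k ->
  query_rel (step st c) = knapsack n (apply_change c st.1).
Proof.
case=> _ _ HB HT Hcells Hc Hk.
rewrite step_query (knapsack_opt _ (leq_addr k n)).
case: c Hc Hk => [x p w /andP[hp hw]|b hb|t ht] Hk.
- have Henv : in_universe n adv (fun u => nth 0 [:: val x] u).
    by apply: in_universe_nth; rewrite /= andbT; have := ltn_ord x; lia.
  apply: (fquery_sem (P := knapsack_prog) (par := [:: p; w]) (I := st.1) (A := st.2) erefl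
           (finput_B_sem _ _ _ HB) (finput_T_sem _ _ _ HT) HB HT Hk) => //.
  by move=> env' Hag _; apply: fcell_new_prog_sem; rewrite ?(Hag 0).
- exact: (fquery_sem (P := knapsack_prog) (I := st.1) (A := st.2) (par := [:: b]) erefl
           (fparam0_sem _ _ _ _) (finput_T_sem _ _ _ HT) hb HT Hk
           (fun env' _ _ => fcell_old_prog_sem [:: b] (env0 := env') Hcells) (in_universe_nth _)).
- exact: (fquery_sem (P := knapsack_prog) (I := st.1) (A := st.2) (par := [:: t]) erefl
           (finput_B_sem _ _ _ HB) (fparam0_sem _ _ _ _) HB ht Hk
           (fun env' _ _ => fcell_old_prog_sem [:: t] (env0 := env') Hcells) (in_universe_nth _)).
Qed.

Lemma run_invariant (cs : seq (change n)) : all (@valid_change n) cs ->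
  bounded (run knapsack_prog adv cs).1 /\ cells_correct (run knapsack_prog adv cs).
Proof.
elim/last_ind: cs => [|cs c IH].
  by split; [exact: bounded_empty | exact: cells_correct_empty].
rewrite all_rcons run_rcons => /andP[Hc /IH[Hb Hcells]].
by split; [exact: bounded_step | exact: cells_correct_step].
Qed.

End Correctness.

Lemma knapsack_prog_correct : ks_correct knapsack_prog bit_advice.
Proof.
move=> n k cs Hne; case/lastP: cs Hne => [//|cs c] _.
rewrite all_rcons => /andP[Hc /(run_invariant k)[Hb Hcells]] Hk.
have := Hk _ (leqnn (size (rcons cs c))); rewrite take_size /ks_param.
rewrite -!(run_fst knapsack_prog (bit_advice k)) run_rcons.
exact: query_step.
Qed.

Lemma bit_advice_computable : advice_computable knapsack_prog bit_advice.
Proof.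
split; first by exists RSucc => x; exact: ev_succ.
case=> [|[|r]] // _.
- exists (RComp rleq [:: RProj 1; RProj 0]) => k [|a [|? ?]] //= _.
  rewrite !andbT.
  by apply: reval_comp2; [exact: reval_proj1 | exact: reval_proj0 | exact: reval_leq].
- exists (RComp rand [:: RComp rleq [:: RProj 1; RProj 0];
                        RComp rand [:: RComp rleq [:: RProj 2; RProj 0];
                                       RComp rbit [:: RProj 1; RProj 2]]]).
  move=> k [|a [|j [|? ?]]] //= _; rewrite andbT -andbA.
  apply: reval_comp2; last exact: reval_and.
    by apply: reval_comp2; [exact: reval_proj1 | exact: reval_proj0 | exact: reval_leq].
  apply: reval_comp2; last exact: reval_and.
    by apply: reval_comp2; [exact: reval_proj2 | exact: reval_proj0 | exact: reval_leq].
  by apply: reval_comp2; [exact: reval_proj1 | exact: reval_proj2 | exact: reval_bit].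
Qed.

Theorem proposition16 : knapsack_in_ParaSD.
Proof.
exists succn; split; first by exists RSucc => x; exact: ev_succ.
exists knapsack_prog, bit_advice; split => //.
- exact: bit_advice_computable.
- exact: knapsack_prog_correct.
Qed.
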